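(* Let $\mathcal{V}$ be a non-trivial quantale, $\mathsf{F}\colon\mathbf{Set}\to\mathbf{Set}$ a functor and $\widehat{\mathsf{F}}$ a lifting of $\mathsf{F}$ to $\mathbf{Cat}(\mathcal{V})$. Then $\widehat{\mathsf{F}}$ is induced by a $\mathcal{V}$-enriched lax extension of $\mathsf{F}$ to $\mathbf{Rel}(\mathcal{V})$ if and only if $\widehat{\mathsf{F}}$ preserves initial morphisms and is $\mathbf{Cat}(\mathcal{V})$-enriched.
   Context: A quantale $(\mathcal{V},\otimes,k)$ is a complete lattice with commutative monoid structure, each $u\otimes-$ preserving joins, $\hom(u,-)$ its right adjoint; non-trivial: $\bot\ne\top$. $\mathcal{V}$-categories $(X,a)$: $k\le a(x,x)$, $a(x,y)\otimes a(y,z)\le a(x,z)$; $\mathcal{V}$-functors $f\colon(X,a)\to(Y,b)$: $a(x,y)\le b(f x,f y)$; initial if equality holds. A lifting of $\mathsf{F}$ is a functor $\widehat{\mathsf{F}}$ on $\mathbf{Cat}(\mathcal{V})$ with $|\widehat{\mathsf{F}}-|=\mathsf{F}|-|$. Each hom-set $\mathbf{Cat}(\mathcal{V})((X,a),(Y,b))$ carries the $\mathcal{V}$-category structure $[f,g]=\bigwedge_{x}b(f(x),g(x))$; a functor $\mathsf{G}$ on $\mathbf{Cat}(\mathcal{V})$ is $\mathbf{Cat}(\mathcal{V})$-enriched if $[f,g]\le[\mathsf{G}f,\mathsf{G}g]$ for all parallel $\mathcal{V}$-functors $f,g$. $\mathcal{V}$-relations $r\colon X\nrightarrow Y$ are maps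 $X\times Y\to\mathcal{V}$, composed by $(s\cdot r)(x,z)=\bigvee_y r(x,y)\otimes s(y,z)$, converse $r^\circ(y,x)=r(x,y)$, identity $1_X$ ($k$ on diagonal, $\bot$ elsewhere), functions viewed as relations with value $k$ on the graph and $\bot$ elsewhere; $(u\otimes r)(x,y)=u\otimes r(x,y)$. A lax extension of $\mathsf{F}$ assigns to each $r\colon X\nrightarrow Y$ a $\widehat{\mathsf{F}}r\colon\mathsf{F}X\nrightarrow\mathsf{F}Y$ with (L1) $r\le r'\Rightarrow\widehat{\mathsf{F}}r\le\widehat{\mathsf{F}}r'$, (L2) $\widehat{\mathsf{F}}s\cdot\widehat{\mathsf{F}}r\le\widehat{\mathsf{F}}(s\cdot r)$, (L3) $\mathsf{F}f\le\widehat{\mathsf{F}}f$ and $(\mathsf{F}f)^\circ\le\widehat{\mathsf{F}}(f^\circ)$; it is $\mathcal{V}$-enriched if $u\otimes1_{\mathsf{F}X}\le\widehat{\mathsf{F}}(u\otimes1_X)$ for all $u\in\mathcal{V}$ and sets $X$. The induced lifting sends $(X,a)$ to $(\mathsf{F}X,\widehat{\mathsf{F}}a)$. *)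

Set Implicit Arguments.
Unset Strict Implicit.

(* A complete lattice presented by its order and arbitrary joins [sup]
   (over predicates = subsets), with a commutative monoid structure
   (tensor, k) such that each [u (x) -] preserves all joins. *)
Record quantale := Quantale {
  qcar :> Type;
  qle : qcar -> qcar -> Prop;
  qle_refl : forall u, qle u u;
  qle_trans : forall u v w, qle u v -> qle v w -> qle u w;
  qle_antisym : forall u v, qle u v -> qle v u -> u = v;
  qsup : (qcar -> Prop) -> qcar;
  qsup_ub : forall (S : qcar -> Prop) u, S u -> qle u (qsup S);
  qsup_least : forall (S : qcar -> Prop) w,
      (forall u, S u -> qle u w) -> qle (qsup S) w;
  qtens : qcar -> qcar -> qcar;
  qk : qcar;
  qtens_assoc : forall u v w, qtens u (qtens v w) = qtens (qtens u v) w;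
  qtens_comm : forall u v, qtens u v = qtens v u;
  qtens_unit : forall u, qtens qk u = u;
  qtens_sup : forall u (S : qcar -> Prop),
      qtens u (qsup S) = qsup (fun w => exists v, S v /\ w = qtens u v)
}.

Section QuantaleDefs.
Variable V : quantale.

Definition qbot : V := qsup (fun _ => False).
Definition qtop : V := qsup (fun _ => True).
Definition qinf (S : V -> Prop) : V :=
  qsup (fun v => forall s, S s -> qle v s).

Definition nontrivial : Prop := qbot <> qtop.

Definition is_vcat (X : Type) (a : X -> X -> V) : Prop :=
  (forall x, qle (qk V) (a x x)) /\
  (forall x y z, qle (qtens (a x y) (a y z)) (a x z)).

Definition is_vfun (X Y : Type) (a : X -> X -> V) (b : Y -> Y -> V)
  (f : X -> Y) : Prop :=
  forall x y, qle (a x y) (b (f x) (f y)).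

Definition is_initial (X Y : Type) (a : X -> X -> V) (b : Y -> Y -> V)
  (f : X -> Y) : Prop :=
  forall x y, a x y = b (f x) (f y).

Definition homV (X Y : Type) (b : Y -> Y -> V) (f g : X -> Y) : V :=
  qinf (fun v => exists x, v = b (f x) (g x)).

Definition vrel (X Y : Type) := X -> Y -> V.

Definition rle (X Y : Type) (r s : vrel X Y) : Prop :=
  forall x y, qle (r x y) (s x y).

Definition rcomp (X Y Z : Type) (s : vrel Y Z) (r : vrel X Y) : vrel X Z :=
  fun x z => qsup (fun v => exists y, v = qtens (r x y) (s y z)).

Definition rconv (X Y : Type) (r : vrel X Y) : vrel Y X :=
  fun y x => r x y.

(* a function viewed as a V-relation: k on the graph, bottom elsewhere *)
Definition rgraph (X Y : Type) (f : X -> Y) : vrel X Y :=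
  fun x y => qsup (fun v => f x = y /\ v = qk V).

Definition rid (X : Type) : vrel X X := rgraph (fun x : X => x).

Definition rscale (X Y : Type) (u : V) (r : vrel X Y) : vrel X Y :=
  fun x y => qtens u (r x y).

End QuantaleDefs.

Record functor := Functor {
  Fobj :> Type -> Type;
  fmap : forall {A B : Type}, (A -> B) -> Fobj A -> Fobj B;
  fmap_id : forall (A : Type) (p : Fobj A), fmap (fun x : A => x) p = p;
  fmap_comp : forall (A B C : Type) (f : A -> B) (g : B -> C) (p : Fobj A),
      fmap (fun x => g (f x)) p = fmap g (fmap f p)
}.

(* ---------- Liftings of F to Cat(V) ----------
   Since |Fhat -| = F |-|, a lifting is given by a V-category structure
   [lift X a] on F X for every V-category (X,a), such that F f is a
   V-functor whenever f is (the action on morphisms is forced to be F f;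
   functoriality is then inherited from F).  Values of [lift] on
   structures that are not V-categories are irrelevant. *)
Record lifting (V : quantale) (F : functor) := Lifting {
  lift : forall X : Type, (X -> X -> V) -> F X -> F X -> V;
  lift_vcat : forall (X : Type) (a : X -> X -> V),
      is_vcat a -> is_vcat (lift a);
  lift_vfun : forall (X Y : Type) (a : X -> X -> V) (b : Y -> Y -> V)
      (f : X -> Y), is_vcat a -> is_vcat b -> is_vfun a b f ->
      is_vfun (lift a) (lift b) (@fmap F _ _ f)
}.

Definition preserves_initial (V : quantale) (F : functor) (L : lifting V F)
  : Prop :=
  forall (X Y : Type) (a : X -> X -> V) (b : Y -> Y -> V) (f : X -> Y),
    is_vcat a -> is_vcat b -> is_initial a b f ->
    is_initial (lift L a) (lift L b) (@fmap F _ _ f).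

Definition catV_enriched (V : quantale) (F : functor) (L : lifting V F)
  : Prop :=
  forall (X Y : Type) (a : X -> X -> V) (b : Y -> Y -> V) (f g : X -> Y),
    is_vcat a -> is_vcat b -> is_vfun a b f -> is_vfun a b g ->
    qle (homV b f g) (homV (lift L b) (@fmap F _ _ f) (@fmap F _ _ g)).

Record lax_extension (V : quantale) (F : functor) := LaxExtension {
  ext : forall X Y : Type, vrel V X Y -> vrel V (F X) (F Y);
  ext_L1 : forall (X Y : Type) (r r' : vrel V X Y),
      rle r r' -> rle (ext r) (ext r');
  ext_L2 : forall (X Y Z : Type) (r : vrel V X Y) (s : vrel V Y Z),
      rle (rcomp (ext s) (ext r)) (ext (rcomp s r));
  ext_L3a : forall (X Y : Type) (f : X -> Y),
      rle (rgraph V (@fmap F _ _ f)) (ext (rgraph V f));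
  ext_L3b : forall (X Y : Type) (f : X -> Y),
      rle (rconv (rgraph V (@fmap F _ _ f))) (ext (rconv (rgraph V f)))
}.

Definition V_enriched (V : quantale) (F : functor) (E : lax_extension V F)
  : Prop :=
  forall (u : V) (X : Type),
    rle (rscale u (@rid V (F X))) (ext E (rscale u (@rid V X))).

Definition induced_by (V : quantale) (F : functor) (L : lifting V F)
  (E : lax_extension V F) : Prop :=
  forall (X : Type) (a : X -> X -> V), is_vcat a ->
    forall p q : F X, lift L a p q = ext E a p q.

From Stdlib Require Import Setoid.

(* (=>) When Fhat is induced by a lax extension E, the laws of E let one move
   F f across the arguments of E r: E maps the graph of f and its converse to
   relations containing k at (p, F f p) and at (F f p, p), so composing with
   them and using (L2) gives E r (p, q) <= E s (p, F f q) whenever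
   r x y <= s x (f y) for all x, y, and three similar inequalities.  This
   yields the missing inequality for initial morphisms, and, starting from
   [f,g] <= E ([f,g] (x) 1_X) (p, p), the inequality
   [f,g] <= Fhat b (F f p, F g p).

   (<=) For r : X -/-> Y, let the collage of r be the V-category on X + Y that
   is discrete on X and on Y and equals r from X to Y, and put
   E r (p, q) := Fhat(collage r) (F inl p, F inr q).  Since Fhat preserves
   initial morphisms, the collages of r, s and s.r may be computed inside one
   collage on X + (Y + Z), where the triangle inequality gives (L2).  The laws
   (L3) and V-enrichment of E come from Cat(V)-enrichment of Fhat applied to
   two maps out of the discrete V-category on X.  Finally E a = Fhat a on a
   V-category a: the codiagonal X + X -> X is a V-functor, and conversely both
   a and its collage embed initially into a three-part collage on X + (X + X). *)

Set Implicit Arguments.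
Unset Strict Implicit.

Section QuantaleFacts.
Variable V : quantale.

Lemma qtens_unit_r (u : V) : qtens u (qk V) = u.
Proof. rewrite qtens_comm; apply qtens_unit. Qed.

Lemma qtens_mono_r (w u v : V) : qle u v -> qle (qtens w u) (qtens w v).
Proof.
  intro Huv.
  assert (Hv : v = qsup (fun z => z = u \/ z = v)).
  { apply qle_antisym.
    - apply qsup_ub; auto.
    - apply qsup_least; intros z [-> | ->]; auto using qle_refl. }
  rewrite Hv, qtens_sup; apply qsup_ub; exists u; auto.
Qed.

Lemma qtens_mono_l (w u v : V) : qle u v -> qle (qtens u w) (qtens v w).
Proof. rewrite (qtens_comm u), (qtens_comm v); apply qtens_mono_r. Qed.

Lemma qtens_mono (u u' v v' : V) :
  qle u u' -> qle v v' -> qle (qtens u v) (qtens u' v').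
Proof.
  intros Hu Hv; eapply qle_trans; [apply qtens_mono_l, Hu | apply qtens_mono_r, Hv].
Qed.

Lemma qbot_le (u : V) : qle (qbot V) u.
Proof. apply qsup_least; intros _ []. Qed.

Lemma qtens_bot_r (t w : V) : qle (qtens t (qbot V)) w.
Proof. unfold qbot; rewrite qtens_sup; apply qsup_least; intros z [v [[] _]]. Qed.

Lemma qtens_bot_l (t w : V) : qle (qtens (qbot V) t) w.
Proof. rewrite qtens_comm; apply qtens_bot_r. Qed.

Lemma qinf_lb (S : V -> Prop) s : S s -> qle (qinf S) s.
Proof. intro Hs; apply qsup_least; intros v Hv; apply Hv, Hs. Qed.

Lemma qinf_glb (S : V -> Prop) (u : V) : (forall s, S s -> qle u s) -> qle u (qinf S).
Proof. intro H; apply qsup_ub, H. Qed.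

Lemma vcat_refl X (a : vrel V X X) x : is_vcat a -> qle (qk V) (a x x).
Proof. intros [Hrefl _]; apply Hrefl. Qed.

Lemma vcat_trans X (a : vrel V X X) x y z :
  is_vcat a -> qle (qtens (a x y) (a y z)) (a x z).
Proof. intros [_ Htrans]; apply Htrans. Qed.

Lemma vcat_sandwich X (a : vrel V X X) w x y z :
  is_vcat a -> qle (qk V) (a w x) -> qle (qk V) (a y z) -> qle (a x y) (a w z).
Proof.
  intros Ha Hwx Hyz.
  rewrite <- (qtens_unit (a x y)), <- (qtens_unit_r (qtens _ (a x y))).
  eapply qle_trans; [apply qtens_mono; [apply qtens_mono_l, Hwx | apply Hyz] |].
  eapply qle_trans; [apply qtens_mono_l, vcat_trans, Ha |].
  apply vcat_trans, Ha.
Qed.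

Lemma rgraph_unit X Y (f : X -> Y) x : qle (qk V) (rgraph V f x (f x)).
Proof. apply qsup_ub; auto. Qed.

Lemma qtens_rgraph_r X Y (f : X -> Y) x y (t t' : V) :
  (f x = y -> qle t t') -> qle (qtens t (rgraph V f x y)) t'.
Proof.
  intro H; unfold rgraph; rewrite qtens_sup; apply qsup_least.
  intros w [v [[Hxy ->] ->]]; rewrite qtens_unit_r; auto.
Qed.

Lemma qtens_rgraph_l X Y (f : X -> Y) x y (t t' : V) :
  (f x = y -> qle t t') -> qle (qtens (rgraph V f x y) t) t'.
Proof. rewrite qtens_comm; apply qtens_rgraph_r. Qed.

Lemma rid_vcat X : is_vcat (rid V (X:=X)).
Proof.
  split.
  - intro x; apply rgraph_unit.
  - intros x y z; apply qtens_rgraph_l; intros ->; apply qle_refl.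
Qed.

Lemma vfun_rid X Y (b : vrel V Y Y) (f : X -> Y) :
  is_vcat b -> is_vfun (rid V (X:=X)) b f.
Proof. intros Hb x y; apply qsup_least; intros v [-> ->]; apply vcat_refl, Hb. Qed.

Lemma rid_tens_l X Y (r : vrel V X Y) x x' y :
  qle (qtens (rid V x x') (r x' y)) (r x y).
Proof. apply qtens_rgraph_l; intros ->; apply qle_refl. Qed.

Lemma rid_tens_r X Y (r : vrel V X Y) x y y' :
  qle (qtens (r x y) (rid V y y')) (r x y').
Proof. apply qtens_rgraph_r; intros ->; apply qle_refl. Qed.

Lemma rgraph_rcomp_le X Y Z (r : vrel V X Y) (s : vrel V X Z) (g : Y -> Z) :
  (forall x y, qle (r x y) (s x (g y))) -> rle (rcomp (rgraph V g) r) s.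
Proof.
  intros H x z; apply qsup_least; intros v [y ->].
  apply qtens_rgraph_r; intros <-; apply H.
Qed.

Lemma rcomp_rgraph_le X Y Z (r : vrel V Y Z) (s : vrel V X Z) (f : X -> Y) :
  (forall x z, qle (r (f x) z) (s x z)) -> rle (rcomp r (rgraph V f)) s.
Proof.
  intros H x z; apply qsup_least; intros v [y ->].
  apply qtens_rgraph_l; intros <-; apply H.
Qed.

Lemma rconv_rcomp_le X Y Z (r : vrel V X Z) (s : vrel V X Y) (g : Y -> Z) :
  (forall x y, qle (r x (g y)) (s x y)) -> rle (rcomp (rconv (rgraph V g)) r) s.
Proof.
  intros H x y; apply qsup_least; intros v [z ->].
  apply qtens_rgraph_r; intros <-; apply H.
Qed.

Lemma rcomp_rconv_le X Y Z (r : vrel V X Z) (s : vrel V Y Z) (f : X -> Y) :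
  (forall x z, qle (r x z) (s (f x) z)) -> rle (rcomp r (rconv (rgraph V f))) s.
Proof.
  intros H y z; apply qsup_least; intros v [x ->].
  apply qtens_rgraph_l; intros <-; apply H.
Qed.

End QuantaleFacts.

Section LaxExtensionFacts.
Variables (V : quantale) (F : functor) (E : lax_extension V F).

Lemma ext_rcomp_tens X Y Z (r : vrel V X Y) (s : vrel V Y Z) p q w :
  qle (qtens (ext E r p q) (ext E s q w)) (ext E (rcomp s r) p w).
Proof. eapply qle_trans; [| apply ext_L2]; apply qsup_ub; exists q; reflexivity. Qed.

Lemma ext_rgraph_unit X Y (f : X -> Y) p :
  qle (qk V) (ext E (rgraph V f) p (fmap f p)).
Proof. eapply qle_trans; [apply rgraph_unit | apply ext_L3a]. Qed.

Lemma ext_rconv_unit X Y (f : X -> Y) p :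
  qle (qk V) (ext E (rconv (rgraph V f)) (fmap f p) p).
Proof. eapply qle_trans; [apply (rgraph_unit V (fmap f) p) | apply ext_L3b]. Qed.

Lemma ext_le_fmap_r X Y Z (r : vrel V X Y) (s : vrel V X Z) (g : Y -> Z) :
  (forall x y, qle (r x y) (s x (g y))) ->
  forall p q, qle (ext E r p q) (ext E s p (fmap g q)).
Proof.
  intros H p q; rewrite <- (qtens_unit_r (ext E r p q)).
  eapply qle_trans; [apply qtens_mono_r, (ext_rgraph_unit g) |].
  eapply qle_trans; [apply ext_rcomp_tens |].
  apply ext_L1, rgraph_rcomp_le, H.
Qed.

Lemma ext_le_fmap_l X Y Z (r : vrel V X Z) (s : vrel V Y Z) (f : X -> Y) :
  (forall x z, qle (r x z) (s (f x) z)) ->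
  forall p q, qle (ext E r p q) (ext E s (fmap f p) q).
Proof.
  intros H p q; rewrite <- (qtens_unit (ext E r p q)).
  eapply qle_trans; [apply qtens_mono_l, (ext_rconv_unit f) |].
  eapply qle_trans; [apply ext_rcomp_tens |].
  apply ext_L1, rcomp_rconv_le, H.
Qed.

Lemma ext_fmap_r_le X Y Z (r : vrel V X Z) (s : vrel V X Y) (g : Y -> Z) :
  (forall x y, qle (r x (g y)) (s x y)) ->
  forall p q, qle (ext E r p (fmap g q)) (ext E s p q).
Proof.
  intros H p q; rewrite <- (qtens_unit_r (ext E r p (fmap g q))).
  eapply qle_trans; [apply qtens_mono_r, (ext_rconv_unit g) |].
  eapply qle_trans; [apply ext_rcomp_tens |].
  apply ext_L1, rconv_rcomp_le, H.
Qed.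

Lemma ext_fmap_l_le X Y Z (r : vrel V Y Z) (s : vrel V X Z) (f : X -> Y) :
  (forall x z, qle (r (f x) z) (s x z)) ->
  forall p q, qle (ext E r (fmap f p) q) (ext E s p q).
Proof.
  intros H p q; rewrite <- (qtens_unit (ext E r (fmap f p) q)).
  eapply qle_trans; [apply qtens_mono_l, (ext_rgraph_unit f) |].
  eapply qle_trans; [apply ext_rcomp_tens |].
  apply ext_L1, rcomp_rgraph_le, H.
Qed.

Lemma induced_preserves_initial (L : lifting V F) :
  induced_by L E -> preserves_initial L.
Proof.
  intros Hind X Y a b f Ha Hb Hf p q; apply qle_antisym.
  - apply (lift_vfun L Ha Hb); intros x y; rewrite Hf; apply qle_refl.
  - rewrite (Hind _ _ Ha), (Hind _ _ Hb).
    eapply qle_trans.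
    + apply (ext_fmap_l_le (s := fun x y => b (f x) y)); intros; apply qle_refl.
    + apply ext_fmap_r_le; intros x y; rewrite Hf; apply qle_refl.
Qed.

Lemma induced_catV_enriched (L : lifting V F) :
  V_enriched E -> induced_by L E -> catV_enriched L.
Proof.
  intros HE Hind X Y a b f g Ha Hb _ _.
  apply qinf_glb; intros s [p ->]; rewrite (Hind _ _ Hb).
  set (u := homV b f g).
  apply qle_trans with (ext E (rscale u (rid V (X:=X))) p p).
  { eapply qle_trans; [| apply HE]; unfold rscale.
    rewrite <- (qtens_unit_r u) at 1; apply qtens_mono_r, rgraph_unit. }
  eapply qle_trans;
    [| apply (ext_le_fmap_l (r := fun x y => b (f x) y)); intros; apply qle_refl].
  eapply qle_trans;
    [| apply (ext_le_fmap_r (r := fun x y => b (f x) (g y))); intros; apply qle_refl].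
  apply ext_L1; intros x y; unfold rscale; rewrite qtens_comm.
  apply qtens_rgraph_l; intros <-; apply qinf_lb; exists x; reflexivity.
Qed.

End LaxExtensionFacts.

Section Collage.
Variable V : quantale.

Definition collage X Y (a : vrel V X X) (b : vrel V Y Y) (r : vrel V X Y) :
  vrel V (X + Y) (X + Y) :=
  fun w w' => match w, w' with
  | inl x, inl x' => a x x'
  | inr y, inr y' => b y y'
  | inl x, inr y => r x y
  | inr _, inl _ => qbot V
  end.

Lemma collage_vcat X Y (a : vrel V X X) (b : vrel V Y Y) (r : vrel V X Y) :
  is_vcat a -> is_vcat b ->
  (forall x x' y, qle (qtens (a x x') (r x' y)) (r x y)) ->
  (forall x y y', qle (qtens (r x y) (b y y')) (r x y')) ->
  is_vcat (collage a b r).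
Proof.
  intros Ha Hb Hl Hr; split.
  - intros [x | y]; simpl; apply vcat_refl; assumption.
  - intros [x | y] [x' | y'] [x'' | y'']; simpl;
      auto using vcat_trans, qtens_bot_l, qtens_bot_r.
Qed.

Definition copair X Y Z (r : vrel V X Y) (s : vrel V X Z) : vrel V X (Y + Z) :=
  fun x w => match w with inl y => r x y | inr z => s x z end.

Definition collage3 X Y Z (a : vrel V X X) (b : vrel V Y Y) (c : vrel V Z Z)
  (rXY : vrel V X Y) (rYZ : vrel V Y Z) (rXZ : vrel V X Z) :
  vrel V (X + (Y + Z)) (X + (Y + Z)) :=
  collage a (collage b c rYZ) (copair rXY rXZ).

Lemma collage3_vcat X Y Z (a : vrel V X X) (b : vrel V Y Y) (c : vrel V Z Z)
  (rXY : vrel V X Y) (rYZ : vrel V Y Z) (rXZ : vrel V X Z) :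
  is_vcat a -> is_vcat b -> is_vcat c ->
  (forall x x' y, qle (qtens (a x x') (rXY x' y)) (rXY x y)) ->
  (forall x y y', qle (qtens (rXY x y) (b y y')) (rXY x y')) ->
  (forall y y' z, qle (qtens (b y y') (rYZ y' z)) (rYZ y z)) ->
  (forall y z z', qle (qtens (rYZ y z) (c z z')) (rYZ y z')) ->
  (forall x x' z, qle (qtens (a x x') (rXZ x' z)) (rXZ x z)) ->
  (forall x z z', qle (qtens (rXZ x z) (c z z')) (rXZ x z')) ->
  (forall x y z, qle (qtens (rXY x y) (rYZ y z)) (rXZ x z)) ->
  is_vcat (collage3 a b c rXY rYZ rXZ).
Proof.
  intros Ha Hb Hc H1 H2 H3 H4 H5 H6 H7.
  apply collage_vcat; auto using collage_vcat.
  - intros x x' [y | z]; simpl; auto.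
  - intros x [y | z] [y' | z']; simpl; auto using qtens_bot_r.
Qed.

Definition dcollage X Y (r : vrel V X Y) : vrel V (X + Y) (X + Y) :=
  collage (rid V (X:=X)) (rid V (X:=Y)) r.

Lemma dcollage_vcat X Y (r : vrel V X Y) : is_vcat (dcollage r).
Proof. apply collage_vcat; auto using rid_vcat, rid_tens_l, rid_tens_r. Qed.

End Collage.

Section LiftingExtension.
Variables (V : quantale) (F : functor) (L : lifting V F).
Hypothesis Hpi : preserves_initial L.
Hypothesis Hen : catV_enriched L.

Definition lifting_ext X Y (r : vrel V X Y) : vrel V (F X) (F Y) :=
  fun p q => lift L (dcollage r) (fmap (@inl X Y) p) (fmap (@inr X Y) q).

(* [f] and [g] are V-functors out of the discrete V-category on [X]. *)
Lemma lift_fmap_ge X Y (b : vrel V Y Y) (f g : X -> Y) u :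
  is_vcat b -> (forall x, qle u (b (f x) (g x))) ->
  forall p, qle u (lift L b (fmap f p) (fmap g p)).
Proof.
  intros Hb H p.
  apply qle_trans with (homV b f g).
  { apply qinf_glb; intros s [x ->]; apply H. }
  eapply qle_trans; [apply (Hen (a := rid V (X:=X))); auto using rid_vcat, vfun_rid |].
  apply qinf_lb; exists p; reflexivity.
Qed.

Lemma lifting_ext_mono X Y (r r' : vrel V X Y) :
  rle r r' -> rle (lifting_ext r) (lifting_ext r').
Proof.
  intros H p q; unfold lifting_ext.
  eapply qle_trans.
  - apply (lift_vfun L (dcollage_vcat r) (dcollage_vcat r') (f := fun w => w)).
    intros [x | y] [x' | y']; simpl; auto using qle_refl.
  - rewrite !fmap_id; apply qle_refl.
Qed.

Lemma lifting_ext_comp X Y Z (r : vrel V X Y) (s : vrel V Y Z) :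
  rle (rcomp (lifting_ext s) (lifting_ext r)) (lifting_ext (rcomp s r)).
Proof.
  intros p w; apply qsup_least; intros v [q ->].
  set (T := collage3 (rid V (X:=X)) (rid V (X:=Y)) (rid V (X:=Z)) r s (rcomp s r)).
  assert (HT : is_vcat T).
  { apply collage3_vcat; auto using rid_vcat, rid_tens_l, rid_tens_r.
    intros x y z; apply qsup_ub; exists y; reflexivity. }
  set (eXY := fun w : X + Y =>
    match w with inl x => @inl X (Y + Z) x | inr y => inr (inl y) end).
  set (eYZ := fun w : Y + Z =>
    match w with inl y => @inr X (Y + Z) (inl y) | inr z => inr (inr z) end).
  set (eXZ := fun w : X + Z =>
    match w with inl x => @inl X (Y + Z) x | inr z => inr (inr z) end).
  unfold lifting_ext.
  rewrite (Hpi (dcollage_vcat r) HT (f := eXY)) by (intros [?|?] [?|?]; reflexivity).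
  rewrite (Hpi (dcollage_vcat s) HT (f := eYZ)) by (intros [?|?] [?|?]; reflexivity).
  rewrite (Hpi (dcollage_vcat (rcomp s r)) HT (f := eXZ))
    by (intros [?|?] [?|?]; reflexivity).
  rewrite <- !fmap_comp.
  apply vcat_trans, lift_vcat, HT.
Qed.

Lemma lifting_ext_rgraph X Y (f : X -> Y) :
  rle (rgraph V (fmap f)) (lifting_ext (rgraph V f)).
Proof.
  intros p q; apply qsup_least; intros v [<- ->].
  unfold lifting_ext; rewrite <- fmap_comp.
  apply lift_fmap_ge; [apply dcollage_vcat | intro x; apply rgraph_unit].
Qed.

Lemma lifting_ext_rconv X Y (f : X -> Y) :
  rle (rconv (rgraph V (fmap f))) (lifting_ext (rconv (rgraph V f))).
Proof.
  intros p q; apply qsup_least; intros v [<- ->].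
  unfold lifting_ext; rewrite <- fmap_comp.
  apply lift_fmap_ge; [apply dcollage_vcat | intro x; apply rgraph_unit].
Qed.

Definition lifting_lax_ext : lax_extension V F :=
  LaxExtension lifting_ext_mono lifting_ext_comp lifting_ext_rgraph lifting_ext_rconv.

Lemma lifting_lax_ext_enriched : V_enriched lifting_lax_ext.
Proof.
  intros u X p q; unfold rscale; rewrite qtens_comm.
  apply qtens_rgraph_l; intros <-; simpl; unfold lifting_ext.
  apply lift_fmap_ge; [apply dcollage_vcat | intro x; simpl].
  rewrite <- (qtens_unit_r u) at 1; apply qtens_mono_r, rgraph_unit.
Qed.

Lemma lifting_lax_ext_induced : induced_by L lifting_lax_ext.
Proof.
  intros X a Ha p q; simpl; unfold lifting_ext; apply qle_antisym.
  - set (T := collage3 (rid V (X:=X)) a (rid V (X:=X)) a a a).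
    assert (HT : is_vcat T).
    { apply collage3_vcat; auto using rid_vcat, rid_tens_l, rid_tens_r, vcat_trans. }
    set (j := fun x : X => @inr X (X + X) (inl x)).
    set (m := fun w : X + X =>
      match w with inl x => @inl X (X + X) x | inr x => inr (inr x) end).
    rewrite (Hpi Ha HT (f := j)) by (intros ? ?; reflexivity).
    rewrite (Hpi (dcollage_vcat a) HT (f := m)) by (intros [?|?] [?|?]; reflexivity).
    rewrite <- !fmap_comp.
    apply vcat_sandwich; [apply lift_vcat, HT | |];
      apply lift_fmap_ge; auto; intro x; exact (vcat_refl x Ha).
  - set (codiag := fun w : X + X => match w with inl x | inr x => x end).
    eapply qle_trans.
    + pose proof (vfun_rid (fun x => x) Ha) as Hid.
      apply (lift_vfun L (dcollage_vcat a) Ha (f := codiag)).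
      intros [x | x] [x' | x']; simpl; auto using qle_refl, qbot_le.
    + rewrite <- !fmap_comp, !fmap_id; apply qle_refl.
Qed.

End LiftingExtension.

Theorem theorem8 (V : quantale) (HV : nontrivial V) (F : functor)
  (L : lifting V F) :
  (exists E : lax_extension V F, V_enriched E /\ induced_by L E) <->
  (preserves_initial L /\ catV_enriched L).
Proof.
  split.
  - intros [E [HE Hind]]; split.
    + exact (induced_preserves_initial Hind).
    + exact (induced_catV_enriched HE Hind).
  - intros [Hpi Hen]; exists (lifting_lax_ext Hpi Hen); split.
    + apply lifting_lax_ext_enriched.
    + apply lifting_lax_ext_induced.
Qed.
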